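(* Let $X$ be a set. (i) For every log-scale $\ell$ on $X$ there exists a metric on $X$ associated with $\ell$. (ii) If $|x-y|$ is a metric on $X$, then the function $\ell(x,y)=-\lfloor \ln|x-y|\rfloor$ (with $\ell(x,x)=+\infty$) is a log-scale on $X$, and the metric $|\cdot|$ is associated with it.
   Context: A log-scale on a set $X$ is a function $\ell:X\times X\to\mathbb{R}\cup\{\infty\}$ such that (1) $\ell(x,y)=\ell(y,x)$ for all $x,y$; (2) $\ell(x,y)=+\infty$ if and only if $x=y$; (3) there is $\delta\ge 0$ with $\ell(x,z)\ge\min(\ell(x,y),\ell(y,z))-\delta$ for all $x,y,z\in X$. A metric $|\cdot|$ on $X$ is associated with the log-scale $\ell$ if there are constants $0<\alpha<1$ and $c>1$ such that $c^{-1}\alpha^{\ell(x,y)}\le|x-y|\le c\,\alpha^{\ell(x,y)}$ for all $x,y\in X$. *)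

From Stdlib Require Import Reals ClassicalEpsilon.
Open Scope R_scope.

(* Extended reals R ∪ {+∞}: [Some r] is the real r, [None] is +∞. *)
Definition xR := option R.

Definition xle (a b : xR) : Prop :=
  match b with
  | None => True
  | Some rb => match a with None => False | Some ra => ra <= rb end
  end.

Definition xmin (a b : xR) : xR :=
  match a, b with
  | None, _ => b
  | _, None => a
  | Some ra, Some rb => Some (Rmin ra rb)
  end.

Definition xsub (a : xR) (d : R) : xR :=
  match a with None => None | Some ra => Some (ra - d) end.

Definition xpow (alpha : R) (a : xR) : R :=
  match a with None => 0 | Some ra => Rpower alpha ra end.

Definition is_logscale {X : Type} (l : X -> X -> xR) : Prop :=
  (forall x y, l x y = l y x) /\
  (forall x y, l x y = None <-> x = y) /\
  (exists delta, 0 <= delta /\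
     forall x y z, xle (xsub (xmin (l x y) (l y z)) delta) (l x z)).

Definition is_metric {X : Type} (d : X -> X -> R) : Prop :=
  (forall x y, 0 <= d x y) /\
  (forall x y, d x y = 0 <-> x = y) /\
  (forall x y, d x y = d y x) /\
  (forall x y z, d x z <= d x y + d y z).

Definition associated {X : Type} (d : X -> X -> R) (l : X -> X -> xR) : Prop :=
  exists alpha c, 0 < alpha < 1 /\ 1 < c /\
    forall x y, / c * xpow alpha (l x y) <= d x y <= c * xpow alpha (l x y).

(* floor: Int_part r = up r - 1 is the integer part (floor) of r *)
Definition log_of_metric {X : Type} (d : X -> X -> R) (x y : X) : xR :=
  if excluded_middle_informative (x = y) then None
  else Some (- IZR (Int_part (ln (d x y)))).

(** A quasi-metric [rho] with constant [K], [K * K <= 2], is within a factor 2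
    of the chain distance, the infimum of the lengths of chains (Frink's
    lemma): a chain of length [S] splits into two parts of length at most
    [S/2] joined by one link, so by induction on its number of links and two
    applications of the quasi-triangle inequality its endpoints are at
    [rho]-distance at most [K^2 S <= 2 S].  For (i), [alpha ^ l] is such a
    quasi-metric with [K = alpha ^ (- delta)] once [alpha] is close enough
    to 1.  For (ii), [e^{floor (ln r)} <= r < e * e^{floor (ln r)}] gives
    both the associated bounds and the log-scale inequality with
    [delta = 2]. *)

From Stdlib Require Import Reals Lra Lia List ClassicalEpsilon.
Open Scope R_scope.

Lemma exp_le_exp (x y : R) : x <= y -> exp x <= exp y.
Proof.
  intros [lt | ->]; [left; exact (exp_increasing _ _ lt) | right; reflexivity].
Qed.

Lemma Rpower_le_antitone (alpha r s : R) :
  0 < alpha < 1 -> r <= s -> Rpower alpha s <= Rpower alpha r.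
Proof.
  intros [alpha_gt0 alpha_lt1] rs. unfold Rpower. apply exp_le_exp.
  assert (ln alpha < 0) by (rewrite <- ln_1; exact (ln_increasing _ _ alpha_gt0 alpha_lt1)).
  nra.
Qed.

Section Xpow.
Variable alpha : R.
Hypothesis alpha_range : 0 < alpha < 1.

Lemma xpow_ge0 (a : xR) : 0 <= xpow alpha a.
Proof. destruct a; simpl; [left; apply exp_pos | right; reflexivity]. Qed.

Lemma xpow_eq0 (a : xR) : xpow alpha a = 0 -> a = None.
Proof. destruct a; simpl; [unfold Rpower; intros E; pose proof (exp_pos (r * ln alpha)); lra | auto]. Qed.

Lemma xpow_antitone (a b : xR) : xle a b -> xpow alpha b <= xpow alpha a.
Proof.
  destruct a as [ra |], b as [rb |]; simpl; try tauto.
  - intros rab; exact (Rpower_le_antitone _ _ _ alpha_range rab).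
  - intros _; left; apply exp_pos.
  - intros _; lra.
Qed.

Lemma xpow_xmin (a b : xR) :
  xpow alpha (xmin a b) = Rmax (xpow alpha a) (xpow alpha b).
Proof.
  destruct a as [ra |], b as [rb |]; simpl.
  - destruct (Rle_dec ra rb) as [rab | rba].
    + rewrite Rmin_left, Rmax_left by (auto; apply Rpower_le_antitone; auto). reflexivity.
    + rewrite Rmin_right, Rmax_right by (try apply Rpower_le_antitone; auto; lra). reflexivity.
  - rewrite Rmax_left; [reflexivity | left; apply exp_pos].
  - rewrite Rmax_right; [reflexivity | left; apply exp_pos].
  - rewrite Rmax_left; lra.
Qed.

Lemma xpow_xsub (a : xR) (delta : R) :
  xpow alpha (xsub a delta) = Rpower alpha (- delta) * xpow alpha a.
Proof.
  destruct a as [ra |]; simpl; [| ring].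
  replace (ra - delta) with (- delta + ra) by ring. apply Rpower_plus.
Qed.

Lemma xpow_quasi_triangle (a b c : xR) (delta : R) :
  xle (xsub (xmin a b) delta) c ->
  xpow alpha c <= Rpower alpha (- delta) * Rmax (xpow alpha a) (xpow alpha b).
Proof. intros H; rewrite <- xpow_xmin, <- xpow_xsub; exact (xpow_antitone _ _ H). Qed.

End Xpow.

Section Chains.
Context {X : Type} (rho : X -> X -> R).
Hypothesis rho_ge0 : forall x y, 0 <= rho x y.

Fixpoint chain_length (x : X) (p : list X) : R :=
  match p with nil => 0 | y :: p' => rho x y + chain_length y p' end.

Fixpoint chain_end (x : X) (p : list X) : X :=
  match p with nil => x | y :: p' => chain_end y p' end.

Lemma chain_length_ge0 (x : X) (p : list X) : 0 <= chain_length x p.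
Proof.
  revert x; induction p as [| y p IH]; intros x; simpl; [lra |].
  pose proof (rho_ge0 x y); pose proof (IH y); lra.
Qed.

Lemma chain_length_app (x : X) (p q : list X) :
  chain_length x (p ++ q) = chain_length x p + chain_length (chain_end x p) q.
Proof. revert x; induction p as [| y p IH]; intros x; simpl; [ring | rewrite IH; ring]. Qed.

Lemma chain_end_app (x : X) (p q : list X) :
  chain_end x (p ++ q) = chain_end (chain_end x p) q.
Proof. revert x; induction p as [| y p IH]; intros x; simpl; auto. Qed.

Lemma chain_end_snoc (x y : X) (p : list X) : chain_end x (p ++ y :: nil) = y.
Proof. now rewrite chain_end_app. Qed.

(* [c] is the length of an already traversed prefix; it makes the statement inductive. *)
Lemma chain_split (T : R) (p : list X) : forall (x : X) (c : R),
  p <> nil -> 0 <= c <= T -> c + chain_length x p <= 2 * T ->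
  exists p1 b p2, p = p1 ++ b :: p2 /\
    c + chain_length x p1 <= T /\ chain_length b p2 <= T.
Proof.
  induction p as [| b p IH]; intros x c p_ne c_range total; [congruence |].
  simpl in total.
  destruct (Rle_dec (c + rho x b) T) as [first_fits | first_too_long].
  - destruct p as [| b' p'].
    + exists nil, b, nil; simpl; repeat split; lra.
    + pose proof (rho_ge0 x b).
      destruct (IH b (c + rho x b)) as (p1 & b0 & p2 & -> & H1 & H2);
        [discriminate | lra | lra |].
      exists (b :: p1), b0, p2; simpl; repeat split; lra.
  - exists nil, b, p; simpl; repeat split; lra.
Qed.

Variable K : R.
Hypothesis K_ge1 : 1 <= K.
Hypothesis K_sqr_le2 : K * K <= 2.
Hypothesis rho_refl : forall x, rho x x = 0.
Hypothesis rho_quasi : forall x y z, rho x z <= K * Rmax (rho x y) (rho y z).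

Lemma quasi_triangle3 (x a b e : X) (S : R) :
  rho x a <= S -> rho a b <= S -> rho b e <= S -> rho x e <= 2 * S.
Proof.
  intros xa ab be.
  assert (S_ge0 : 0 <= S) by (pose proof (rho_ge0 x a); lra).
  assert (ae : rho a e <= K * S).
  { eapply Rle_trans; [apply (rho_quasi a b e) |].
    apply Rmult_le_compat_l; [lra | now apply Rmax_lub]. }
  assert (rho x e <= K * (K * S)).
  { eapply Rle_trans; [apply (rho_quasi x a e) |].
    apply Rmult_le_compat_l; [lra | apply Rmax_lub; nra]. }
  nra.
Qed.

Lemma rho_chain_end_le (p : list X) (x : X) :
  rho x (chain_end x p) <= 2 * chain_length x p.
Proof.
  remember (length p) as n eqn:len_p; assert (len_le : (length p <= n)%nat) by lia.
  clear len_p; revert p x len_le.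
  induction n as [| n IH]; intros p x len_le.
  { destruct p; [simpl; rewrite rho_refl; lra | simpl in len_le; lia]. }
  destruct p as [| y p]; [simpl; rewrite rho_refl; lra |].
  set (S := chain_length x (y :: p)).
  pose proof (chain_length_ge0 x (y :: p)).
  destruct (chain_split (S / 2) (y :: p) x 0) as (p1 & b & p2 & E & H1 & H2);
    [discriminate | unfold S in *; lra | unfold S; lra |].
  rewrite E in len_le |- *; rewrite length_app in len_le; simpl in len_le.
  rewrite chain_end_app; simpl.
  assert (S_split : S = chain_length x p1 + rho (chain_end x p1) b + chain_length b p2).
  { unfold S; rewrite E, chain_length_app; simpl; ring. }
  pose proof (IH p1 x ltac:(lia)); pose proof (IH p2 b ltac:(lia)).
  pose proof (chain_length_ge0 x p1); pose proof (chain_length_ge0 b p2).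
  apply (quasi_triangle3 x (chain_end x p1) b); lra.
Qed.

End Chains.

Section ChainDistance.
Context {X : Type} (rho : X -> X -> R).
Hypothesis rho_ge0 : forall x y, 0 <= rho x y.

(** Lengths of the chains from [x] to [y] are [chain_length rho x (l ++ y :: nil)];
    their infimum is taken as minus the supremum of their opposites. *)
Definition opp_chain_lengths (x y : X) (s : R) : Prop :=
  exists l, s = - chain_length rho x (l ++ y :: nil).

Lemma opp_chain_lengths_bound (x y : X) : bound (opp_chain_lengths x y).
Proof.
  exists 0; intros s [l ->].
  pose proof (chain_length_ge0 rho rho_ge0 x (l ++ y :: nil)); lra.
Qed.

Lemma opp_chain_lengths_inhabited (x y : X) : exists s, opp_chain_lengths x y s.
Proof. exists (- chain_length rho x (nil ++ y :: nil)), nil; reflexivity. Qed.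

Definition chain_dist (x y : X) : R :=
  - proj1_sig (completeness _ (opp_chain_lengths_bound x y)
                              (opp_chain_lengths_inhabited x y)).

Lemma chain_dist_le_chain (x y : X) (l : list X) :
  chain_dist x y <= chain_length rho x (l ++ y :: nil).
Proof.
  unfold chain_dist; destruct (completeness _ _ _) as [m [m_ub m_lub]]; simpl.
  assert (- chain_length rho x (l ++ y :: nil) <= m) by (apply m_ub; now exists l).
  lra.
Qed.

Lemma chain_dist_ge (x y : X) (b : R) :
  (forall l, b <= chain_length rho x (l ++ y :: nil)) -> b <= chain_dist x y.
Proof.
  intros b_lower; unfold chain_dist; destruct (completeness _ _ _) as [m [m_ub m_lub]]; simpl.
  assert (m <= - b) by (apply m_lub; intros s [l ->]; specialize (b_lower l); lra).
  lra.
Qed.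

Lemma chain_dist_le (x y : X) : chain_dist x y <= rho x y.
Proof. pose proof (chain_dist_le_chain x y nil); simpl in *; lra. Qed.

Lemma chain_dist_triangle (x y z : X) : chain_dist x z <= chain_dist x y + chain_dist y z.
Proof.
  assert (forall l2, chain_dist x z - chain_length rho y (l2 ++ z :: nil) <= chain_dist x y).
  { intros l2; apply chain_dist_ge; intros l1.
    pose proof (chain_dist_le_chain x z ((l1 ++ y :: nil) ++ l2)) as H.
    rewrite <- app_assoc, chain_length_app, chain_end_snoc in H; lra. }
  assert (chain_dist x z - chain_dist x y <= chain_dist y z)
    by (apply chain_dist_ge; intros l2; specialize (H l2); lra).
  lra.
Qed.

Hypothesis rho_sym : forall x y, rho x y = rho y x.

Lemma chain_length_rev (l : list X) : forall x y,
  chain_length rho x (l ++ y :: nil) = chain_length rho y (rev l ++ x :: nil).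
Proof.
  induction l as [| z l IH]; intros x y; simpl; [rewrite rho_sym; reflexivity |].
  rewrite IH, (chain_length_app rho y (rev l ++ z :: nil)), chain_end_snoc; simpl.
  rewrite (rho_sym z x); ring.
Qed.

Lemma chain_dist_sym (x y : X) : chain_dist x y = chain_dist y x.
Proof.
  apply Rle_antisym; apply chain_dist_ge; intros l;
    rewrite chain_length_rev; apply chain_dist_le_chain.
Qed.

End ChainDistance.

Theorem quasi_metric_metrizable {X : Type} (rho : X -> X -> R) (K : R) :
  (forall x y, 0 <= rho x y) -> (forall x y, rho x y = 0 <-> x = y) ->
  (forall x y, rho x y = rho y x) -> 1 <= K -> K * K <= 2 ->
  (forall x y z, rho x z <= K * Rmax (rho x y) (rho y z)) ->
  exists d, is_metric d /\ forall x y, rho x y / 2 <= d x y <= rho x y.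
Proof.
  intros rho_ge0 rho_eq0 rho_sym K_ge1 K_sqr_le2 rho_quasi.
  assert (rho_refl : forall x, rho x x = 0) by (intros x; now apply rho_eq0).
  assert (bounds : forall x y, rho x y / 2 <= chain_dist rho rho_ge0 x y <= rho x y).
  { intros x y; split; [| apply chain_dist_le].
    apply chain_dist_ge; intros l.
    pose proof (rho_chain_end_le rho rho_ge0 K K_ge1 K_sqr_le2 rho_refl rho_quasi
                  (l ++ y :: nil) x) as H.
    rewrite chain_end_snoc in H; lra. }
  exists (chain_dist rho rho_ge0); split; [| exact bounds].
  repeat split.
  - intros x y; pose proof (bounds x y); pose proof (rho_ge0 x y); lra.
  - intros d0; apply rho_eq0; pose proof (bounds x y); pose proof (rho_ge0 x y); lra.
  - intros ->; pose proof (bounds y y); rewrite rho_refl in *; lra.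
  - apply chain_dist_sym, rho_sym.
  - apply chain_dist_triangle.
Qed.

Lemma logscale_metrizable {X : Type} (l : X -> X -> xR) :
  is_logscale l -> exists d, is_metric d /\ associated d l.
Proof.
  intros [l_sym [l_None [delta [delta_ge0 l_tri]]]].
  (* [alpha ^ (- 2 delta) = 2 ^ (delta / (delta + 1)) <= 2] *)
  set (alpha := Rpower 2 (- / (2 * (delta + 1)))).
  assert (alpha_range : 0 < alpha < 1).
  { split; [apply exp_pos |].
    rewrite <- (Rpower_O 2) by lra; apply Rpower_lt; [lra |].
    assert (0 < / (2 * (delta + 1))) by (apply Rinv_0_lt_compat; lra); lra. }
  set (K := Rpower alpha (- delta)).
  assert (K_ge1 : 1 <= K).
  { rewrite <- (Rpower_O alpha) by lra; apply Rpower_le_antitone; lra. }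
  assert (K_sqr_le2 : K * K <= 2).
  { unfold K, alpha; rewrite <- Rpower_plus, Rpower_mult.
    apply (Rle_trans _ (Rpower 2 1)); [apply Rle_Rpower; [lra |] | rewrite Rpower_1; lra].
    apply (Rmult_le_reg_r (delta + 1)); [lra |]; field_simplify; lra. }
  set (rho := fun x y => xpow alpha (l x y)).
  destruct (quasi_metric_metrizable rho K) as [d [d_metric d_bounds]]; auto.
  - intros; apply xpow_ge0.
  - intros x y; rewrite <- l_None; split; [apply xpow_eq0 | intros E; unfold rho; now rewrite E].
  - intros; unfold rho; now rewrite l_sym.
  - intros x y z; apply xpow_quasi_triangle; auto.
  - exists d; split; [exact d_metric |].
    exists alpha, 2; split; [exact alpha_range | split; [lra |]].
    intros x y; pose proof (d_bounds x y); pose proof (xpow_ge0 alpha (l x y)).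
    fold (rho x y); lra.
Qed.

Lemma floor_ln_bounds (r : R) : 0 < r ->
  exp (IZR (Int_part (ln r))) <= r < exp 1 * exp (IZR (Int_part (ln r))).
Proof.
  intros r_gt0; destruct (base_Int_part (ln r)) as [floor_le floor_gt].
  rewrite <- (exp_ln r) at 2 3 by exact r_gt0; rewrite <- exp_plus; split.
  - apply exp_le_exp; exact floor_le.
  - apply exp_increasing; lra.
Qed.

Lemma floor_ln_quasi_triangle (a b c : R) : 0 < a -> 0 < b -> 0 < c -> c <= a + b ->
  Rmin (- IZR (Int_part (ln a))) (- IZR (Int_part (ln b))) - 2
    <= - IZR (Int_part (ln c)).
Proof.
  assert (exp_1_gt2 : 2 < exp 1) by (pose proof (exp_ineq1 1); lra).
  assert (exp_2 : exp 1 * exp 1 = exp 2) by (rewrite <- exp_plus; f_equal; ring).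
  (* [e^{floor ln c} <= c <= 2 m < 2 e e^{floor ln m} < e^{2 + floor ln m}] *)
  assert (step : forall m, 0 < m -> 0 < c -> c <= 2 * m ->
            IZR (Int_part (ln c)) < IZR (Int_part (ln m)) + 2).
  { intros m m_gt0 c_gt0 cm.
    destruct (floor_ln_bounds m m_gt0); destruct (floor_ln_bounds c c_gt0).
    apply exp_lt_inv; rewrite exp_plus, <- exp_2.
    pose proof (exp_pos (IZR (Int_part (ln m)))); nra. }
  intros a_gt0 b_gt0 c_gt0 c_le.
  destruct (Rle_dec b a).
  - pose proof (step a a_gt0 c_gt0 ltac:(lra)).
    apply (Rle_trans _ (- IZR (Int_part (ln a)) - 2)); [apply Rplus_le_compat_r, Rmin_l | lra].
  - pose proof (step b b_gt0 c_gt0 ltac:(lra)).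
    apply (Rle_trans _ (- IZR (Int_part (ln b)) - 2)); [apply Rplus_le_compat_r, Rmin_r | lra].
Qed.

Section LogOfMetric.
Context {X : Type} (d : X -> X -> R).

Lemma log_of_metric_diag (x : X) : log_of_metric d x x = None.
Proof. unfold log_of_metric; destruct (excluded_middle_informative (x = x)); congruence. Qed.

Lemma log_of_metric_neq (x y : X) : x <> y ->
  log_of_metric d x y = Some (- IZR (Int_part (ln (d x y)))).
Proof. unfold log_of_metric; destruct (excluded_middle_informative (x = y)); tauto. Qed.

Hypothesis d_metric : is_metric d.

Lemma metric_pos (x y : X) : x <> y -> 0 < d x y.
Proof.
  destruct d_metric as [d_ge0 [d_eq0 _]]; intros xy.
  destruct (d_ge0 x y) as [| E]; [assumption | now apply eq_sym, d_eq0 in E].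
Qed.

Lemma log_of_metric_logscale : is_logscale (log_of_metric d).
Proof.
  destruct d_metric as [_ [_ [d_sym d_tri]]].
  repeat split.
  - intros x y; destruct (excluded_middle_informative (x = y)) as [-> | xy];
      [reflexivity | rewrite !log_of_metric_neq, d_sym by auto; reflexivity].
  - intros E; destruct (excluded_middle_informative (x = y)) as [| xy]; [assumption |].
    rewrite log_of_metric_neq in E by exact xy; discriminate.
  - intros ->; apply log_of_metric_diag.
  - exists 2; split; [lra |]; intros x y z.
    destruct (excluded_middle_informative (x = z)) as [-> | xz];
      [rewrite log_of_metric_diag; exact I |].
    destruct (excluded_middle_informative (x = y)) as [-> | xy];
      [rewrite log_of_metric_diag, log_of_metric_neq by exact xz; simpl; lra |].
    destruct (excluded_middle_informative (y = z)) as [-> | yz];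
      [rewrite log_of_metric_diag, log_of_metric_neq by exact xy; simpl; lra |].
    rewrite !log_of_metric_neq by auto; simpl.
    apply floor_ln_quasi_triangle; auto using metric_pos.
Qed.

Lemma metric_associated_log_of_metric : associated d (log_of_metric d).
Proof.
  destruct d_metric as [_ [d_eq0 _]].
  assert (exp_1_gt1 : exp 0 < exp 1) by (apply exp_increasing; lra).
  rewrite exp_0 in exp_1_gt1.
  exists (exp (-1)), (exp 1); split; [split; [apply exp_pos | rewrite <- exp_0; apply exp_increasing; lra] |].
  split; [exact exp_1_gt1 |]; intros x y.
  destruct (excluded_middle_informative (x = y)) as [-> | xy].
  { rewrite log_of_metric_diag; simpl; rewrite (proj2 (d_eq0 y y) eq_refl); lra. }
  rewrite log_of_metric_neq by exact xy; simpl; unfold Rpower; rewrite ln_exp.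
  replace (- IZR (Int_part (ln (d x y))) * -1) with (IZR (Int_part (ln (d x y)))) by ring.
  destruct (floor_ln_bounds (d x y) (metric_pos x y xy)).
  pose proof (exp_pos (IZR (Int_part (ln (d x y))))).
  split; [| lra].
  apply (Rmult_le_reg_l (exp 1)); [lra |].
  rewrite <- Rmult_assoc, Rinv_r by lra; nra.
Qed.

End LogOfMetric.

Theorem proposition1p1p3 (X : Type) :
  (forall l : X -> X -> xR, is_logscale l ->
     exists d : X -> X -> R, is_metric d /\ associated d l) /\
  (forall d : X -> X -> R, is_metric d ->
     is_logscale (log_of_metric d) /\ associated d (log_of_metric d)).
Proof.
  split.
  - apply logscale_metrizable.
  - intros d d_metric; split;
      [apply log_of_metric_logscale | apply metric_associated_log_of_metric]; exact d_metric.
Qed.
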